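(* Let $(\mathcal{X},\rho)$ be a metric space, $\eta:\mathcal{X}\to\mathcal{Y}$ a function, and $x\in\mathcal{X}$. For any $0<r<\mathrm{margin}_\eta(x)/3$, the open ball $B(x,r)$ is mutually-labeling for $\eta$.
   Context: $\mathrm{margin}_\eta(x)=\inf\{\rho(x,x'):\eta(x')\ne\eta(x)\}$ (infimum of empty set $=+\infty$). A set $U$ is mutually-labeling for $\eta$ if $\mathrm{diam}(U)<\mathrm{margin}_\eta(x)$ for all $x\in U$, where $\mathrm{diam}(U)=\sup_{z,z'\in U}\rho(z,z')$. *)

From mathcomp Require Import all_boot all_order all_algebra.
From mathcomp Require Import all_classical all_reals ereal.
Set Implicit Arguments. Unset Strict Implicit. Unset Printing Implicit Defensive.
Import Order.TTheory GRing.Theory Num.Theory.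
Local Open Scope classical_set_scope.
Local Open Scope ring_scope.

Definition is_metric (R : realType) (X : Type) (rho : X -> X -> R) : Prop :=
  [/\ (forall x y, 0 <= rho x y),
      (forall x y, rho x y = 0 <-> x = y),
      (forall x y, rho x y = rho y x) &
      (forall x y z, rho x z <= rho x y + rho y z)].

(* margin_eta(x) = inf { rho(x,x') : eta x' <> eta x }, inf of empty = +oo *)
Definition margin (R : realType) (X Y : Type) (rho : X -> X -> R)
  (eta : X -> Y) (x : X) : \bar R :=
  ereal_inf [set (rho x x')%:E | x' in [set x' | eta x' <> eta x]].

Definition diam (R : realType) (X : Type) (rho : X -> X -> R) (U : set X)
  : \bar R :=
  ereal_sup [set (rho z z')%:E | z in U & z' in U].

Definition mutually_labeling (R : realType) (X Y : Type) (rho : X -> X -> R)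
  (eta : X -> Y) (U : set X) : Prop :=
  forall x, U x -> (diam rho U < margin rho eta x)%E.

Definition open_ball (R : realType) (X : Type) (rho : X -> X -> R)
  (x : X) (r : R) : set X := [set y | rho x y < r].

From mathcomp Require Import all_boot all_order all_algebra.
From mathcomp Require Import all_classical all_reals ereal.
From mathcomp Require Import lra.
Set Implicit Arguments. Unset Strict Implicit. Unset Printing Implicit Defensive.
Import Order.TTheory GRing.Theory Num.Theory.
Local Open Scope classical_set_scope.
Local Open Scope ring_scope.

(* For y in B(x, r): points with a label other than eta x lie at distance
   at least 3r from x, so eta y = eta x and such points lie at distance more
   than 3r - r = 2r from y, i.e. margin y > 2r; the triangle inequality
   through x bounds diam B(x, r) by 2r. *)

Section Margin.
Variables (R : realType) (X Y : Type) (rho : X -> X -> R) (eta : X -> Y).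

Lemma margin_le_dist (x z : X) :
  eta z <> eta x -> (margin rho eta x <= (rho x z)%:E)%E.
Proof. by move=> ezx; apply: ereal_inf_lbound; exists z. Qed.

Lemma margin_ge (x : X) (a : R) :
  (forall z, eta z <> eta x -> a <= rho x z) -> (a%:E <= margin rho eta x)%E.
Proof.
by move=> far; apply: le_ereal_inf_tmp => _ [z ezx <-]; rewrite lee_fin far.
Qed.

Lemma margin_gt_dist_label (x y : X) :
  ((rho x y)%:E < margin rho eta x)%E -> eta y = eta x.
Proof.
move=> near; apply: contrapT => eyx.
by move: near; rewrite ltNge margin_le_dist.
Qed.

Hypothesis hrho : is_metric rho.

Lemma margin_ge_sub_dist (x y : X) (a : R) :
  eta y = eta x -> (a%:E <= margin rho eta x)%E ->
  ((a - rho x y)%:E <= margin rho eta y)%E.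
Proof.
case: hrho => _ _ _ tri eyx ax; apply: margin_ge => z; rewrite eyx => ezx.
have := le_trans ax (margin_le_dist ezx); rewrite lee_fin.
have := tri x y z; lra.
Qed.

Lemma diam_open_ball_le (x : X) (r : R) :
  (diam rho (open_ball rho x r) <= (2 * r)%:E)%E.
Proof.
case: hrho => _ _ sym tri.
apply: ge_ereal_sup => _ [z zx [z' z'x <-]]; rewrite lee_fin.
rewrite /open_ball /= in zx z'x.
have := tri z x z'; rewrite (sym z x); lra.
Qed.

End Margin.

Theorem lemma3 (R : realType) (X Y : Type) (rho : X -> X -> R)
  (hrho : is_metric rho) (eta : X -> Y) (x : X) (r : R) :
  0 < r -> (r%:E < margin rho eta x / 3%:E)%E ->
  mutually_labeling rho eta (open_ball rho x r).
Proof.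
move=> r_gt0 r_lt y yx; rewrite /open_ball /= in yx.
have m3r : ((3 * r)%:E < margin rho eta x)%E.
  by move: r_lt; rewrite inver pnatr_eq0 lte_pdivlMr // -EFinM mulrC.
have eyx : eta y = eta x.
  by apply: margin_gt_dist_label; apply: lt_trans m3r; rewrite lte_fin; lra.
apply: le_lt_trans (diam_open_ball_le hrho x r) _.
apply: lt_le_trans (margin_ge_sub_dist hrho eyx (ltW m3r)).
by rewrite lte_fin; lra.
Qed.
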